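(* Let $r\geq 2$ and $0\leq \alpha\leq 1-\frac{1}{r}$. Let $G$ be a graph on $n$ vertices with minimum degree $\delta=\delta(G)$, let $\mathbf{x}=(x_{1}, \dots, x_{n})$ be a non-negative unit eigenvector of $A_{\alpha}(G)$ corresponding to $\lambda_{\alpha}(G)$, and let $x=\min \{x_{1}, \dots, x_{n}\}$. If $x>0$, then $$\lambda_{\alpha}(G)\leq \alpha \delta+ (1-\alpha)\sqrt{\delta^2+\left(\frac{1}{nx^2}-1\right)n\delta}.$$
   Context: $A_\alpha(G)=\alpha D(G)+(1-\alpha)A(G)$, where $A(G)$ is the adjacency matrix and $D(G)$ the diagonal degree matrix; $\lambda_\alpha(G)$ is its largest eigenvalue. *)

From HB Require Import structures.
From mathcomp Require Import all_boot all_order all_algebra.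
Set Implicit Arguments. Unset Strict Implicit. Unset Printing Implicit Defensive.
Import Order.TTheory GRing.Theory Num.Theory.
Local Open Scope ring_scope.

(* A simple graph on vertex set 'I_n is a symmetric irreflexive relation e. *)

Definition deg (n : nat) (e : rel 'I_n) (i : 'I_n) : nat := #|[set j | e i j]|.

(* minimum degree delta(G) (for n > 0; the identity n is never attained
   since every degree is at most n - 1) *)
Definition mindeg (n : nat) (e : rel 'I_n) : nat := \big[minn/n]_(i < n) deg e i.

Definition adjmx (R : nzRingType) (n : nat) (e : rel 'I_n) : 'M[R]_n :=
  \matrix_(i, j) (e i j)%:R.

Definition degmx (R : nzRingType) (n : nat) (e : rel 'I_n) : 'M[R]_n :=
  \matrix_(i, j) (if i == j then (deg e i)%:R else 0).

Definition Aalpha (R : nzRingType) (n : nat) (e : rel 'I_n) (alpha : R) : 'M[R]_n :=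
  alpha *: degmx R e + (1 - alpha) *: adjmx R e.

Definition largest_eigenvalue (F : numFieldType) (n : nat) (M : 'M[F]_n) (l : F) : Prop :=
  eigenvalue M l /\ (forall m, eigenvalue M m -> m <= l).

From HB Require Import structures.
From mathcomp Require Import all_boot all_order all_algebra ring lra.
Set Implicit Arguments. Unset Strict Implicit. Unset Printing Implicit Defensive.
Import Order.TTheory GRing.Theory Num.Theory.
Local Open Scope ring_scope.

(* Let v be a vertex of minimum degree d and s the sum of the entries of x
   over its neighbours.  The eigenvalue equation at v reads
   (lam - alpha d) x_v = (1 - alpha) s.  By Cauchy-Schwarz s^2 <= d Q, with Q
   the sum of the squared entries over the neighbours, and Q <= 1 - (n - d) xmin^2
   because each of the n - d remaining squares is at least xmin^2.  Hence
   (lam - alpha d)^2 xmin^2 <= (1 - alpha)^2 d (1 - (n - d) xmin^2), and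
   d (1 - (n - d) xmin^2) / xmin^2 is exactly the radicand of the bound. *)

Section WeightedSums.

Variables (R : realDomainType) (n : nat) (a : 'I_n -> R).

Lemma wsum_le_sum_sub (z : 'I_n -> R) (c : R) :
  (forall j, a j <= 1) -> (forall j, c <= z j) ->
  \sum_j a j * z j <= \sum_j z j - (n%:R - \sum_j a j) * c.
Proof.
move=> a_le1 c_le.
have : \sum_j (1 - a j) * c <= \sum_j (1 - a j) * z j.
  by apply: ler_sum => j _; rewrite ler_wpM2l ?subr_ge0.
rewrite -mulr_suml sumrB sumr_const card_ord.
under [X in _ <= X]eq_bigr => j _ do rewrite mulrBl mul1r.
rewrite sumrB; lra.
Qed.

Hypothesis a_ge0 : forall j, 0 <= a j.

Lemma cauchy_schwarz_weighted (y : 'I_n -> R) :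
  (\sum_j a j * y j) ^+ 2 <= (\sum_j a j) * \sum_j a j * y j ^+ 2.
Proof.
set S := \sum_j a j; set T := \sum_j a j * y j ^+ 2.
have lagrange : \sum_j \sum_k a j * a k * (y j - y k) ^+ 2
    = \sum_j \sum_k a k * (a j * y j ^+ 2) + \sum_j \sum_k a j * (a k * y k ^+ 2)
      - 2 * \sum_j \sum_k (a j * y j) * (a k * y k).
  rewrite mulr_sumr -big_split -sumrB /=; apply: eq_bigr => j _.
  rewrite mulr_sumr -big_split -sumrB /=; apply: eq_bigr => k _; ring.
have ST1 : \sum_j \sum_k a k * (a j * y j ^+ 2) = S * T.
  by rewrite mulr_sumr; apply: eq_bigr => j _; rewrite mulr_suml.
have ST2 : \sum_j \sum_k a j * (a k * y k ^+ 2) = S * T.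
  by rewrite mulr_suml; apply: eq_bigr => j _; rewrite mulr_sumr.
have : 0 <= \sum_j \sum_k a j * a k * (y j - y k) ^+ 2.
  apply: sumr_ge0 => j _; apply: sumr_ge0 => k _.
  by rewrite mulr_ge0 ?sqr_ge0 // mulr_ge0.
have sq : (\sum_j a j * y j) ^+ 2 = \sum_j \sum_k (a j * y j) * (a k * y k).
  by rewrite expr2 big_distrlr.
rewrite lagrange ST1 ST2 sq; lra.
Qed.

End WeightedSums.

Lemma natr_deg (R : nzSemiRingType) (n : nat) (e : rel 'I_n) (i : 'I_n) :
  (deg e i)%:R = \sum_j (e i j)%:R :> R.
Proof.
rewrite /deg -sum1_card natr_sum big_mkcond /=.
by apply: eq_bigr => j _; rewrite inE; case: (e i j).
Qed.

Lemma sqr_neighbour_sum_le (R : realDomainType) (n : nat) (e : rel 'I_n) (v : 'I_n)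
    (y : 'I_n -> R) (c : R) :
  (forall j, c <= y j ^+ 2) ->
  (\sum_j (e v j)%:R * y j) ^+ 2
    <= (deg e v)%:R * (\sum_j y j ^+ 2 - (n%:R - (deg e v)%:R) * c).
Proof.
move=> c_le; have a_ge0 j : 0 <= (e v j)%:R :> R by rewrite ler0n.
rewrite natr_deg; apply: le_trans (cauchy_schwarz_weighted a_ge0 y) _.
rewrite ler_wpM2l ?sumr_ge0 //.
by apply: (wsum_le_sum_sub (z := fun j => y j ^+ 2)) => // j; case: (e v j).
Qed.

Lemma mindeg_le_deg (n : nat) (e : rel 'I_n) (i : 'I_n) : (mindeg e <= deg e i)%N.
Proof.
rewrite /mindeg; move: (mem_index_enum i); elim: (index_enum _) => // j s IH.
rewrite big_cons inE => /predU1P [<- | /IH]; first exact: geq_minl.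
exact/leq_trans/geq_minr.
Qed.

Lemma mindeg_attained (n : nat) (e : rel 'I_n) :
  (0 < n)%N -> exists v, deg e v = mindeg e.
Proof.
move=> n_gt0; have [v _ v_min] := arg_minnP (deg e) (isT : xpredT (Ordinal n_gt0)).
exists v; apply/eqP; rewrite eqn_leq; apply/andP; split.
  apply: (big_ind (fun m => deg e v <= m)%N).
  - by apply: leq_trans (max_card _) _; rewrite card_ord.
  - by move=> m1 m2; rewrite leq_min => -> ->.
  - by move=> i _; exact: v_min.
exact: mindeg_le_deg.
Qed.

Lemma Aalpha_mulmx_row (R : comNzRingType) (n : nat) (e : rel 'I_n) (alpha : R)
    (x : 'cV[R]_n) (i : 'I_n) :
  (Aalpha e alpha *m x) i 0
    = alpha * (deg e i)%:R * x i 0 + (1 - alpha) * \sum_j (e i j)%:R * x j 0.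
Proof.
rewrite mxE (eq_bigr (fun j => alpha * ((i == j)%:R * (deg e i)%:R * x j 0)
                                + (1 - alpha) * ((e i j)%:R * x j 0))); last first.
  by move=> j _; rewrite /Aalpha !mxE; case: (i == j) => /=; ring.
rewrite big_split /= -!mulr_sumr -mulrA (bigD1 i) //= eqxx mul1r big1 ?addr0 //.
by move=> j ji; rewrite eq_sym (negbTE ji) !mul0r.
Qed.

Lemma eigenvalue_bound_at_vertex (R : rcfType) (lam alpha d n s xv xmin : R) :
  alpha <= 1 -> 0 < n -> 0 < xmin -> xmin <= xv ->
  (lam - alpha * d) * xv = (1 - alpha) * s ->
  s ^+ 2 <= d * (1 - (n - d) * xmin ^+ 2) ->
  lam <= alpha * d + (1 - alpha) * Num.sqrt (d ^+ 2 + ((n * xmin ^+ 2)^-1 - 1) * n * d).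
Proof.
move=> alpha_le1 n_gt0 xmin_gt0 xmin_le eig s_le.
set K := _ + _ * n * d; set t := lam - alpha * d.
rewrite -lerBlDl -/t.
have [t_le0 | t_gt0] := lerP t 0.
  by apply: le_trans t_le0 _; rewrite mulr_ge0 ?sqrtr_ge0 ?subr_ge0.
have Kx : K * xmin ^+ 2 = d * (1 - (n - d) * xmin ^+ 2).
  by rewrite /K; field; rewrite !lt0r_neq0 // exprn_gt0.
have t2_le : t ^+ 2 <= (1 - alpha) ^+ 2 * K.
  rewrite -(ler_pM2r (exprn_gt0 2 xmin_gt0)) -[_ * K * _]mulrA Kx.
  apply: le_trans (_ : t ^+ 2 * xv ^+ 2 <= _).
    by rewrite ler_wpM2l ?sqr_ge0 // lerXn2r // nnegrE ltW // (lt_le_trans xmin_gt0).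
  by rewrite -exprMn eig exprMn ler_wpM2l ?sqr_ge0.
rewrite -(ger0_norm (ltW t_gt0)) -sqrtr_sqr.
apply: le_trans (ler_wsqrtr t2_le) _.
by rewrite sqrtrM ?sqr_ge0 // sqrtr_sqr ger0_norm ?subr_ge0.
Qed.

Theorem lemma4p1 (R : rcfType) (r n : nat) (e : rel 'I_n) (alpha lam : R)
    (x : 'cV[R]_n) (xmin : R) :
  (2 <= r)%N ->
  symmetric e -> irreflexive e ->
  0 <= alpha -> alpha <= 1 - (r%:R)^-1 ->
  largest_eigenvalue (Aalpha e alpha) lam ->
  (forall i, 0 <= x i 0) ->
  \sum_(i < n) (x i 0) ^+ 2 = 1 ->
  Aalpha e alpha *m x = lam *: x ->
  (forall i, xmin <= x i 0) -> (exists i, x i 0 = xmin) ->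
  0 < xmin ->
  lam <= alpha * (mindeg e)%:R
         + (1 - alpha) * Num.sqrt ((mindeg e)%:R ^+ 2
              + ((n%:R * xmin ^+ 2)^-1 - 1) * n%:R * (mindeg e)%:R).
Proof.
move=> _ _ _ _ alpha_le _ _ x_norm eig xmin_le [i0 _] xmin_gt0.
have n_gt0 : (0 < n)%N := leq_ltn_trans (leq0n i0) (ltn_ord i0).
have alpha_le1 : alpha <= 1 by apply: le_trans alpha_le _; rewrite gerBl invr_ge0.
have [v <-] := mindeg_attained e n_gt0.
apply: (eigenvalue_bound_at_vertex (s := \sum_j (e v j)%:R * x j 0) alpha_le1 _
         xmin_gt0 (xmin_le v)).
- by rewrite ltr0n.
- have := congr1 (fun M : 'cV[R]_n => M v 0) eig.
  by rewrite /= Aalpha_mulmx_row mxE => eig_v; rewrite mulrBl -eig_v addrC addKr.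
- rewrite -[X in _ * (X - _)]x_norm; apply: sqr_neighbour_sum_le => j.
  by rewrite lerXn2r // nnegrE ?(ltW xmin_gt0) // (le_trans (ltW xmin_gt0)).
Qed.
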